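(* Let $\Pi$ be a random permutation with values in $S_n$. Then $\Pi$ is $L$-decomposable if and only if, for every consecutive partition $\underline{\kappa}=(\underline{\kappa}_1,\ldots,\underline{\kappa}_{j+1})$ of $\{1,\ldots,n\}$, the ordered marginals $\Pi_{\underline{\kappa}_1},\ldots,\Pi_{\underline{\kappa}_{j+1}}$ are conditionally independent given the vector of unordered marginals $\{\Pi_{\underline{\kappa}}\}$; that is, for every $\pi\in S_n$ with $P(\{\Pi_{\underline{\kappa}}\}=\{\pi_{\underline{\kappa}}\})>0$, \[ P(\Pi=\pi \mid \{\Pi_{\underline{\kappa}}\}=\{\pi_{\underline{\kappa}}\})=\prod_{i=1}^{j+1} P(\Pi_{\underline{\kappa}_i}=\pi_{\underline{\kappa}_i}\mid \{\Pi_{\underline{\kappa}}\}=\{\pi_{\underline{\kappa}}\}). \]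
   Context: $S_n$ is the group of permutations of $\{1,\ldots,n\}$; $\Pi$ is a random element of $S_n$ with distribution $p(\pi)=P(\Pi=\pi)$. For a vector $v$ and $i\le j$, write $v\{i:j\}=\{v(i),\ldots,v(j)\}$ (unordered set; empty if $j<i$) and $v(i:j)=(v(i),\ldots,v(j))$ (ordered tuple). $\Pi$ (or $p$) is called $L$-decomposable if for every $2\le k\le n-2$ and every $\pi\in S_n$, $P(\Pi(k+1)=\pi(k+1)\mid \Pi(1:k)=\pi(1:k)) = P(\Pi(k+1)=\pi(k+1)\mid \Pi\{1:k\}=\pi\{1:k\})$ whenever the left-hand side is defined (equivalently, the random sets $\Pi\{1:k\}$, $k=1,\dots,n$, form a Markov chain). A consecutive partition is determined by sections $0=\kappa_0<\kappa_1<\cdots<\kappa_j<\kappa_{j+1}=n$ via $\underline{\kappa}_i=\{\kappa_{i-1}+1,\ldots,\kappa_i\}$. For $\pi\in S_n$, the ordered marginal is $\pi_{\underline{\kappa}_i}=\pi(\kappa_{i-1}+1:\kappa_i)$, the unordered marginal is $\{\pi_{\underline{\kappa}_i}\}=\pi\{\kappa_{i-1}+1:\kappa_i\}$, and $\{\pi_{\underline{\kappa}}\}=(\{\pi_{\underline{\kappa}_1}\},\ldots,\{\pi_{\underline{\kappa}_{j+1}}\})$. *)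

From HB Require Import structures.
From mathcomp Require Import all_boot all_order all_algebra all_fingroup.
Set Implicit Arguments. Unset Strict Implicit. Unset Printing Implicit Defensive.
Import Order.TTheory GRing.Theory Num.Theory.
Local Open Scope ring_scope.

(* Positions are 0-based: paper position i (1 <= i <= n) is ordinal i-1. *)
Section Defs.
Variables (R : realFieldType) (n : nat).

Definition is_dist (p : 'S_n -> R) : Prop :=
  (forall s, 0 <= p s) /\ \sum_(s : 'S_n) p s = 1.

Definition Pr (p : 'S_n -> R) (A : pred 'S_n) : R := \sum_(s : 'S_n | A s) p s.

Definition condP (p : 'S_n -> R) (A B : pred 'S_n) : R :=
  Pr p [pred s : 'S_n | A s && B s] / Pr p B.

(* ordered marginal on 0-based positions a <= i < b : (s(a+1), ..., s(b)) in paper *)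
Definition seg_tuple (s : 'S_n) (a b : nat) : seq 'I_n :=
  [seq s i | i : 'I_n <- [seq i : 'I_n <- enum 'I_n | ((a <= i) && (i < b))%N]].

Definition seg_set (s : 'S_n) (a b : nat) : {set 'I_n} :=
  [set s i | i : 'I_n & (a <= i < b)%N].

(* L-decomposability: for 2 <= k <= n-2 (paper indexing), position k+1 of the
   paper is ordinal k; prefix Pi(1:k) is the 0-based segment [0,k). *)
Definition L_decomposable (p : 'S_n -> R) : Prop :=
  forall (k : nat), (2 <= k)%N -> (k <= n - 2)%N ->
  forall (pi : 'S_n) (i : 'I_n), nat_of_ord i = k ->
  0 < Pr p [pred s : 'S_n | seg_tuple s 0 k == seg_tuple pi 0 k] ->
  condP p [pred s : 'S_n | s i == pi i] [pred s : 'S_n | seg_tuple s 0 k == seg_tuple pi 0 k]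
  = condP p [pred s : 'S_n | s i == pi i] [pred s : 'S_n | seg_set s 0 k == seg_set pi 0 k].

(* A consecutive partition is given by the interior sections
   cs = [:: kappa_1; ...; kappa_j] with 0 < kappa_1 < ... < kappa_j < n. *)
Definition consecutive_sections (cs : seq nat) : Prop := path ltn 0%N (rcons cs n).

(* blocks (kappa_{i-1}, kappa_i), i = 1..j+1, as pairs of 0-based half-open bounds *)
Definition blocks (cs : seq nat) : seq (nat * nat) :=
  let c := 0%N :: rcons cs n in zip c (behead c).

Definition unord_eq (cs : seq nat) (pi : 'S_n) : pred 'S_n :=
  [pred s : 'S_n | [seq seg_set s ab.1 ab.2 | ab <- blocks cs]
            == [seq seg_set pi ab.1 ab.2 | ab <- blocks cs]].

Definition ord_eq (ab : nat * nat) (pi : 'S_n) : pred 'S_n :=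
  [pred s : 'S_n | seg_tuple s ab.1 ab.2 == seg_tuple pi ab.1 ab.2].

End Defs.

(* Both sides are shown equivalent to "cut independence at every cut k":
   given the prefix set Pi{1:k}, the ordered prefix Pi(1:k) and the ordered
   suffix Pi(k+1:n) are independent (stated cross-multiplied, so that null
   events need no special treatment).
   - Segments: agreement of permutations on position intervals, prefix sets,
     and splicing of two permutations with the same prefix set.
   - Probability: cut independence extends to all prefix- and
     suffix-determined events, and survives conditioning on such events.
   - Markov: L-decomposability is the Markov equation at each step, and the
     Markov equations give cut independence by downward induction from n.
   - Blocks: cut independence yields the block factorization by induction on
     the number of sections; a single section gives back cut independence. *)

From HB Require Import structures.
From mathcomp Require Import all_boot all_order all_algebra all_fingroup ring.
Set Implicit Arguments. Unset Strict Implicit. Unset Printing Implicit Defensive.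
Import Order.TTheory GRing.Theory Num.Theory.
Local Open Scope ring_scope.

Section Segments.
Variable n : nat.
Implicit Types (s t u v pi : 'S_n) (a b c k : nat).

Definition agree s t a b : bool :=
  [forall i : 'I_n, (a <= i < b)%N ==> (s i == t i)].

Lemma agreeC s t a b : agree s t a b = agree t s a b.
Proof. by apply/forallP/forallP => H i; rewrite eq_sym; apply: H. Qed.

Lemma agree_trans s t u a b : agree s t a b -> agree t u a b -> agree s u a b.
Proof.
move=> /forallP H1 /forallP H2; apply/forallP => i; apply/implyP => Hi.
by rewrite (eqP (implyP (H1 i) Hi)) (implyP (H2 i) Hi).
Qed.

Lemma agree_transr s t u a b : agree s t a b -> agree s u a b = agree t u a b.
Proof.
move=> hst; apply/idP/idP; last exact: agree_trans.
by apply: agree_trans; rewrite agreeC.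
Qed.

Lemma agree_sub s t a b a' b' : (a <= a')%N -> (b' <= b)%N ->
  agree s t a b -> agree s t a' b'.
Proof.
move=> h1 h2 /forallP H; apply/forallP => i; apply/implyP => /andP[i1 i2].
by apply: (implyP (H i)); rewrite (leq_trans h1 i1) (leq_trans i2 h2).
Qed.

Lemma agree_split s t a b c : (a <= b <= c)%N ->
  agree s t a c = agree s t a b && agree s t b c.
Proof.
move=> /andP[hab hbc]; apply/idP/andP => [H|[/forallP H1 /forallP H2]].
  by split; apply: agree_sub H.
apply/forallP => i; apply/implyP => /andP[h1 h2]; case: (ltnP i b) => hib.
  by apply: (implyP (H1 i)); rewrite h1 hib.
by apply: (implyP (H2 i)); rewrite hib h2.
Qed.

Lemma agree_all s t k : (n <= k)%N -> agree s t 0 k = (s == t).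
Proof.
move=> hk; apply/forallP/eqP => [H|->]; last by move=> i; rewrite eqxx implybT.
apply/permP => i; apply/eqP; apply: (implyP (H i)).
by rewrite /= (leq_trans (ltn_ord i) hk).
Qed.

Lemma agree_nil s t a b : (b <= a)%N -> agree s t a b.
Proof.
move=> h; apply/forallP => i; apply/implyP => /andP[h1 h2].
by rewrite ltnNge (leq_trans h h1) in h2.
Qed.

Lemma agree_one s t (i : 'I_n) : agree s t i i.+1 = (s i == t i).
Proof.
apply/forallP/idP => [H|h j]; first by apply: (implyP (H i)); rewrite leqnn ltnSn.
apply/implyP => /andP[h1 h2].
by have -> : j = i by apply: val_inj; apply/eqP; rewrite eqn_leq -ltnS h2 h1.
Qed.

Lemma agree_cat s t k : agree s t 0 k -> agree s t k n -> s = t.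
Proof.
move=> /forallP H1 /forallP H2; apply/permP => i; apply/eqP.
case: (ltnP i k) => hi; first by apply: (implyP (H1 i)).
by apply: (implyP (H2 i)); rewrite hi ltn_ord.
Qed.

Lemma seg_tupleE s t a b : (seg_tuple s a b == seg_tuple t a b) = agree s t a b.
Proof.
rewrite /seg_tuple; apply/eqP/forallP => [H i|H].
  apply/implyP => hi; apply/eqP; move/eq_in_map: H; apply.
  by rewrite mem_filter hi mem_enum.
apply/eq_in_map => i; rewrite mem_filter => /andP[hi _]; exact/eqP/(implyP (H i)).
Qed.

Lemma mem_seg_set s a b i : (s i \in seg_set s a b) = (a <= i < b)%N.
Proof. by rewrite /seg_set mem_imset ?inE //; apply: perm_inj. Qed.

Lemma seg_set_agree s t a b : agree s t a b -> seg_set s a b = seg_set t a b.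
Proof.
move=> /forallP H; apply: eq_in_imset => i; rewrite inE => hi.
exact/eqP/(implyP (H i)).
Qed.

Lemma seg_set_split s a b c : (a <= b <= c)%N ->
  seg_set s a c = seg_set s a b :|: seg_set s b c.
Proof.
move=> /andP[hab hbc]; apply/setP => x; rewrite -(permKV s x) inE !mem_seg_set.
case: (ltnP ((s^-1)%g x) b) => hib /=.
  by rewrite (leq_trans hib hbc) /=; case: (a <= _)%N.
by rewrite andbF /= (leq_trans hab hib).
Qed.

Lemma seg_set_disj s a b c : [disjoint seg_set s a b & seg_set s b c].
Proof.
rewrite -setI_eq0; apply/eqP/setP => x; rewrite -(permKV s x) !inE !mem_seg_set.
by case: (ltnP ((s^-1)%g x) b); rewrite ?andbF.
Qed.

Lemma seg_set0 s : seg_set s 0 0 = set0.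
Proof. by apply/setP => x; rewrite -(permKV s x) mem_seg_set inE. Qed.

Lemma seg_set_full s k : (n <= k)%N -> seg_set s 0 k = setT.
Proof.
move=> hk; apply/setP => x; rewrite -(permKV s x) mem_seg_set inE /=.
exact: leq_trans (ltn_ord _) hk.
Qed.

Lemma seg_set_compl s k : seg_set s k n = ~: seg_set s 0 k.
Proof.
apply/setP => x; rewrite -(permKV s x) !inE !mem_seg_set /=.
by rewrite ltn_ord andbT -leqNgt.
Qed.

Lemma seg_set_suf s t k : agree s t k n -> seg_set s 0 k = seg_set t 0 k.
Proof. by move/seg_set_agree; rewrite !seg_set_compl => /setC_inj. Qed.

Lemma seg_set_low s a b : (a <= b)%N ->
  seg_set s 0 a = seg_set s 0 b :\: seg_set s a b.
Proof.
move=> hab; rewrite (@seg_set_split s 0 a b) ?hab // setDUl setDv setU0.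
by apply/esym/setDidPl; apply: seg_set_disj.
Qed.

Lemma seg_set_diff s a b : (a <= b)%N ->
  seg_set s a b = seg_set s 0 b :\: seg_set s 0 a.
Proof.
move=> hab; rewrite (@seg_set_split s 0 a b) ?hab // setDUl setDv set0U.
by apply/esym/setDidPl; rewrite disjoint_sym; apply: seg_set_disj.
Qed.

Lemma seg_set_eqK s t a b : (a <= b)%N -> seg_set s 0 a = seg_set t 0 a ->
  (seg_set s a b == seg_set t a b) = (seg_set s 0 b == seg_set t 0 b).
Proof.
move=> hab ha; apply/eqP/eqP => h.
  by rewrite !(@seg_set_split _ 0 a b) ?hab // ha h.
by rewrite !(seg_set_diff _ hab) ha h.
Qed.

Lemma seg_set_eqKr s t a b : (a <= b)%N -> seg_set s a b = seg_set t a b ->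
  (seg_set s 0 a == seg_set t 0 a) = (seg_set s 0 b == seg_set t 0 b).
Proof.
move=> hab hab'; apply/eqP/eqP => h.
  by rewrite !(@seg_set_split _ 0 a b) ?hab // h hab'.
by rewrite !(seg_set_low _ hab) h hab'.
Qed.

Lemma seg_set_one s t a :
  (seg_set s a a.+1 == seg_set t a a.+1) = agree s t a a.+1.
Proof.
apply/eqP/idP => [h|]; last exact: seg_set_agree.
apply/forallP => i; apply/implyP => /andP[h1 h2].
have : s i \in seg_set t a a.+1 by rewrite -h mem_seg_set h1 h2.
case/imsetP => j; rewrite inE => /andP[j1 j2] ->.
have ei : val i = a by apply/eqP; rewrite eqn_leq -ltnS h2 h1.
have ej : val j = a by apply/eqP; rewrite eqn_leq -ltnS j2 j1.
by rewrite (val_inj (etrans ei (esym ej))).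
Qed.

Lemma splice_ex u v k : seg_set u 0 k = seg_set v 0 k ->
  exists s, agree s u 0 k && agree s v k n.
Proof.
move=> Huv; pose f (i : 'I_n) := if (i < k)%N then u i else v i.
have cross (i j : 'I_n) : (i < k)%N -> (k <= j)%N -> u i != v j.
  move=> hi hj; apply/eqP => E.
  have : u i \in seg_set u 0 k by rewrite mem_seg_set.
  by rewrite Huv E mem_seg_set /= ltnNge hj.
have finj : injective f.
  move=> i j; rewrite /f; case: (ltnP i k) => hi; case: (ltnP j k) => hj.
  - exact: perm_inj.
  - by move=> E; move: (cross _ _ hi hj); rewrite E eqxx.
  - by move=> E; move: (cross _ _ hj hi); rewrite E eqxx.
  - exact: perm_inj.
exists (perm finj); apply/andP; split; apply/forallP => i;
  apply/implyP => /andP[h1 h2]; rewrite permE /f.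
  by rewrite h2.
by rewrite ltnNge h1.
Qed.

Lemma splice_unique u v k s0 : agree s0 u 0 k -> agree s0 v k n ->
  forall s, agree s u 0 k && agree s v k n = (s == s0).
Proof.
move=> h1 h2 s; apply/andP/eqP => [[a1 a2]|->]; last by split.
apply: (agree_cat (k := k)).
  by apply: agree_trans a1 _; rewrite agreeC.
by apply: agree_trans a2 _; rewrite agreeC.
Qed.

End Segments.

Lemma exchange_big3 (V : nmodType) (I J K : finType) (P : pred I)
    (Q : I -> J -> bool) (W : I -> K -> bool) (F : J -> K -> V) :
  \sum_(i | P i) \sum_(j | Q i j) \sum_(k | W i k) F j k
  = \sum_j \sum_k \sum_(i | [&& P i, Q i j & W i k]) F j k.
Proof.
transitivity (\sum_i \sum_j \sum_k if [&& P i, Q i j & W i k] then F j k else 0).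
  rewrite big_mkcond; apply: eq_bigr => i _; case: (P i) => /=; last first.
    by rewrite big1 // => j _; rewrite big1.
  rewrite big_mkcond; apply: eq_bigr => j _; case: (Q i j) => /=; last first.
    by rewrite big1.
  by rewrite big_mkcond.
rewrite exchange_big; apply: eq_bigr => j _; rewrite exchange_big.
by apply: eq_bigr => k _; rewrite [RHS]big_mkcond.
Qed.

Section Probability.
Variables (R : realFieldType) (n : nat).
Implicit Types (p q : 'S_n -> R) (s t u v pi : 'S_n) (A B G : pred 'S_n) (k : nat).

Definition nonneg p := forall s, 0 <= p s.

(* The measure p restricted to the event G (an unnormalised conditioning). *)
Definition restr p G : 'S_n -> R := fun s => if G s then p s else 0.

Lemma Pr_ext p A B : A =1 B -> Pr p A = Pr p B.
Proof. exact: eq_bigl. Qed.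

Lemma Pr1 p pi : Pr p (pred1 pi) = p pi.
Proof. exact: big_pred1_eq. Qed.

Lemma Pr_restr p G A : Pr (restr p G) A = Pr p (fun s => G s && A s).
Proof.
rewrite /Pr /restr [RHS]big_mkcond [LHS]big_mkcond; apply: eq_bigr => s _.
by case: (G s); case: (A s).
Qed.

Lemma Pr_ge0 p A : nonneg p -> 0 <= Pr p A.
Proof. by move=> hp; apply: sumr_ge0. Qed.

Lemma Pr_le p A B : nonneg p -> (forall s, A s -> B s) -> Pr p A <= Pr p B.
Proof.
move=> hp hAB; rewrite /Pr [leLHS]big_mkcond [leRHS]big_mkcond.
apply: ler_sum => s _; case: ifP => hA; first by rewrite (hAB _ hA).
by case: ifP.
Qed.

Lemma Pr_supp p W A B : (forall s, ~~ W s -> p s = 0) ->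
  (forall s, W s -> A s = B s) -> Pr p A = Pr p B.
Proof.
move=> hW hAB; rewrite /Pr [LHS]big_mkcond [RHS]big_mkcond; apply: eq_bigr => s _.
by case hs: (W s); [rewrite hAB | rewrite hW ?hs //; case: ifP; case: ifP].
Qed.

Lemma PrI_sub p A B : (forall s, A s -> B s) ->
  Pr p [pred s : 'S_n | A s && B s] = Pr p A.
Proof. by move=> hAB; apply: Pr_ext => s /=; case hA: (A s) => //=; rewrite hAB. Qed.

Lemma Pr_null p A B : nonneg p -> (forall s, A s -> B s) -> Pr p B = 0 -> Pr p A = 0.
Proof.
by move=> hp hAB hB; apply/eqP; rewrite eq_le Pr_ge0 // andbT -hB Pr_le.
Qed.

Lemma p_null p A pi : nonneg p -> A pi -> Pr p A = 0 -> p pi = 0.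
Proof. by move=> hp hA; rewrite -Pr1; apply: Pr_null => // s /eqP ->. Qed.

Definition prefix_determined k A := forall s t, agree s t 0 k -> A s = A t.
Definition suffix_determined k A := forall s t, agree s t k n -> A s = A t.

Lemma prefix_determined_agree pi k a b : (b <= k)%N ->
  prefix_determined k (fun s => agree s pi a b).
Proof. by move=> hb s t /(agree_sub (leq0n a) hb); apply: agree_transr. Qed.

Lemma suffix_determined_agree pi k a b : (k <= a)%N -> (b <= n)%N ->
  suffix_determined k (fun s => agree s pi a b).
Proof. by move=> ha hb s t /(agree_sub ha hb); apply: agree_transr. Qed.

Lemma prefix_determined_cut pi k c : (c <= k)%N ->
  prefix_determined k (fun s => seg_set s 0 c == seg_set pi 0 c).
Proof. by move=> hc s t /(agree_sub (leqnn 0) hc)/seg_set_agree ->. Qed.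

Lemma suffix_determined_cut pi k c : (k <= c)%N ->
  suffix_determined k (fun s => seg_set s 0 c == seg_set pi 0 c).
Proof. by move=> hc s t /(agree_sub hc (leqnn n))/seg_set_suf ->. Qed.

(* Conditional independence at the cut k: given the set of values taken
   before k, the ordered prefix and the ordered suffix are independent.
   Cross-multiplied form, so that null conditioning events need no care. *)
Definition cut_indep p k := forall pi,
  p pi * Pr p (fun s => seg_set s 0 k == seg_set pi 0 k)
  = Pr p (fun s => agree s pi 0 k) * Pr p (fun s => agree s pi k n).

Lemma splice_sum (x : R) u v k :
  \sum_(s | agree s u 0 k && agree s v k n) x
  = if seg_set u 0 k == seg_set v 0 k then x else 0.
Proof.
case: eqP => [/splice_ex [s0 /andP[h1 h2]] | neq].
  by rewrite (big_pred1 s0) // => s; rewrite (splice_unique h1 h2).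
rewrite big_pred0 // => s; apply/andP => -[a1 a2]; apply: neq.
by rewrite -(seg_set_agree a1) (seg_set_suf a2).
Qed.

(* The proof expands both sides
   as sums over pairs (u, v) and matches each pair with its splice. *)
Lemma cond_indep p k (X : {set 'I_n}) A B :
  cut_indep p k -> prefix_determined k A -> suffix_determined k B ->
  Pr p (fun s => [&& seg_set s 0 k == X, A s & B s]) * Pr p (fun s => seg_set s 0 k == X)
  = Pr p (fun s => (seg_set s 0 k == X) && A s) * Pr p (fun s => (seg_set s 0 k == X) && B s).
Proof.
move=> hcut hA hB.
have transfer u v s :
    [&& [&& seg_set s 0 k == X, A s & B s], agree u s 0 k & agree v s k n]
    = [&& seg_set u 0 k == X, A u & B v] && (agree s u 0 k && agree s v k n).
  rewrite !(agreeC _ s); case a1: (agree s u 0 k); case a2: (agree s v k n);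
    rewrite ?andbF //.
  by rewrite (seg_set_agree a1) (hA _ _ a1) (hB _ _ a2).
have -> : Pr p (fun s => [&& seg_set s 0 k == X, A s & B s])
          * Pr p (fun s => seg_set s 0 k == X)
   = \sum_(s | [&& seg_set s 0 k == X, A s & B s])
       \sum_(u | agree u s 0 k) \sum_(v | agree v s k n) p u * p v.
  rewrite /Pr mulr_suml; apply: eq_bigr => s /and3P[/eqP <- _ _].
  by rewrite hcut big_distrlr.
rewrite exchange_big3 /Pr big_distrlr /= [RHS]big_mkcond; apply: eq_bigr => u _.
case hu: ((seg_set u 0 k == X) && A u); last first.
  rewrite big1 // => v _; rewrite big_pred0 // => s.
  by rewrite transfer; move: hu; case: (_ == X); case: (A u).
case/andP: hu => /eqP hu hAu; rewrite [RHS]big_mkcond; apply: eq_bigr => v _.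
rewrite (eq_bigl _ _ (transfer u v)) hu eqxx hAu /=.
case hBv: (B v); last by rewrite andbF big_pred0.
by rewrite andbT splice_sum eq_sym hu.
Qed.

Lemma cond_indep_prefix p k pi B : cut_indep p k -> suffix_determined k B ->
  Pr p (fun s => agree s pi 0 k && B s) * Pr p (fun s => seg_set s 0 k == seg_set pi 0 k)
  = Pr p (fun s => agree s pi 0 k)
    * Pr p (fun s => (seg_set s 0 k == seg_set pi 0 k) && B s).
Proof.
move=> hcut hB; set X := seg_set pi 0 k.
have preX s : agree s pi 0 k -> seg_set s 0 k == X by move/seg_set_agree ->.
have := cond_indep X hcut (prefix_determined_agree pi 0 (leqnn k)) hB.
rewrite (Pr_ext _ (A := fun s => [&& seg_set s 0 k == X, agree s pi 0 k & B s])
                  (B := fun s => agree s pi 0 k && B s)); last first.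
  by move=> s; case h: (agree s pi 0 k); rewrite ?andbF // preX.
rewrite (Pr_ext _ (A := fun s => (seg_set s 0 k == X) && agree s pi 0 k)
                  (B := fun s => agree s pi 0 k)) //.
by move=> s; case h: (agree s pi 0 k); rewrite ?andbF // preX.
Qed.

Lemma cond_indep_suffix p k pi A : cut_indep p k -> prefix_determined k A ->
  Pr p (fun s => A s && agree s pi k n) * Pr p (fun s => seg_set s 0 k == seg_set pi 0 k)
  = Pr p (fun s => (seg_set s 0 k == seg_set pi 0 k) && A s)
    * Pr p (fun s => agree s pi k n).
Proof.
move=> hcut hA; set X := seg_set pi 0 k.
have sufX s : agree s pi k n -> seg_set s 0 k == X by move/seg_set_suf ->.
have := cond_indep X hcut hA (suffix_determined_agree pi (leqnn k) (leqnn n)).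
rewrite (Pr_ext _ (A := fun s => [&& seg_set s 0 k == X, A s & agree s pi k n])
                  (B := fun s => A s && agree s pi k n)); last first.
  by move=> s; case h: (agree s pi k n); rewrite ?andbF // sufX.
rewrite (Pr_ext _ (A := fun s => (seg_set s 0 k == X) && agree s pi k n)
                  (B := fun s => agree s pi k n)) //.
by move=> s; case h: (agree s pi k n); rewrite ?andbF // sufX.
Qed.

Lemma cut_indep_restr p k G A B : nonneg p -> cut_indep p k ->
  prefix_determined k A -> suffix_determined k B -> G =1 predI A B ->
  cut_indep (restr p G) k.
Proof.
move=> hp hcut hA hB hG pi; rewrite !Pr_restr {1}/restr hG /=.
set X := seg_set pi 0 k; set b := Pr p (fun s => seg_set s 0 k == X).
have hApre s : agree s pi 0 k -> A s = A pi by apply: hA.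
have hBsuf s : agree s pi k n -> B s = B pi by apply: hB.
case hApi: (A pi); last first.
  have -> : Pr p (fun s => G s && agree s pi 0 k) = 0.
    apply: big_pred0 => s; rewrite hG /=.
    by case h: (agree s pi 0 k); rewrite ?andbF // hApre // hApi.
  by rewrite !mul0r.
case hBpi: (B pi); last first.
  have -> : Pr p (fun s => G s && agree s pi k n) = 0.
    apply: big_pred0 => s; rewrite hG /=.
    by case h: (agree s pi k n); rewrite ?andbF // hBsuf // hBpi !andbF.
  by rewrite mul0r mulr0.
rewrite /=; have [b0|bN0] := eqVneq b 0.
  rewrite (Pr_null (B := fun s => seg_set s 0 k == X) hp _ b0) ?mulr0; last first.
    by move=> s /andP[].
  rewrite (Pr_null (B := fun s => seg_set s 0 k == X) hp _ b0) ?mul0r //.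
  by move=> s /andP[_ /seg_set_agree ->].
rewrite (Pr_ext _ (A := fun s => G s && (seg_set s 0 k == X))
                  (B := fun s => [&& seg_set s 0 k == X, A s & B s])); last first.
  by move=> s; rewrite hG /= andbC andbA.
rewrite (Pr_ext _ (A := fun s => G s && agree s pi 0 k)
                  (B := fun s => agree s pi 0 k && B s)); last first.
  by move=> s; rewrite hG /=; case h: (agree s pi 0 k); rewrite ?andbF // hApre // hApi andbT.
rewrite (Pr_ext _ (A := fun s => G s && agree s pi k n)
                  (B := fun s => A s && agree s pi k n)); last first.
  move=> s; rewrite hG /=; case h: (agree s pi k n); rewrite ?andbF //.
  by rewrite hBsuf // hBpi andbT.
apply: (mulfI (mulf_neq0 bN0 bN0)).
transitivity ((p pi * b) * (Pr p (fun s => [&& seg_set s 0 k == X, A s & B s]) * b));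
  first by ring.
rewrite (hcut pi) (cond_indep X hcut hA hB).
transitivity ((Pr p (fun s => agree s pi 0 k && B s) * b)
  * (Pr p (fun s => A s && agree s pi k n) * b)); last by ring.
by rewrite (cond_indep_prefix _ hcut hB) (cond_indep_suffix _ hcut hA); ring.
Qed.

End Probability.

Section Markov.
Variables (R : realFieldType) (n : nat).
Implicit Types (p : 'S_n -> R) (s pi : 'S_n) (k : nat).

Definition markov_eq p k pi : Prop :=
  Pr p (fun s => agree s pi 0 k.+1) * Pr p (fun s => seg_set s 0 k == seg_set pi 0 k)
  = Pr p (fun s => agree s pi 0 k)
    * Pr p (fun s => (seg_set s 0 k == seg_set pi 0 k) && agree s pi k k.+1).

Definition markov_at p k := forall pi, markov_eq p k pi.

(* At a cut beyond the last position there is nothing to condition on. *)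
Lemma cut_indep_full p k : (n <= k)%N -> cut_indep p k.
Proof.
move=> hk pi; rewrite (Pr_ext _ (A := fun s => agree s pi 0 k) (B := pred1 pi)); last first.
  by move=> s; rewrite agree_all.
rewrite Pr1; congr (_ * _); apply: Pr_ext => s.
by rewrite agree_nil // !seg_set_full ?eqxx.
Qed.

(* Cut independence at k, applied to the event Pi(k) = pi(k) of the suffix,
   is the Markov equation at k. *)
Lemma markov_of_cut_indep p k : (k < n)%N -> cut_indep p k -> markov_at p k.
Proof.
move=> hkn hcut pi; rewrite /markov_eq.
rewrite (Pr_ext _ (A := fun s => agree s pi 0 k.+1)
                  (B := fun s => agree s pi 0 k && agree s pi k k.+1)); last first.
  by move=> s; rewrite (@agree_split _ s pi 0 k k.+1) ?leqnSn.
exact: cond_indep_prefix hcut (suffix_determined_agree pi (leqnn k) hkn).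
Qed.

Lemma cut_indep_step p k : nonneg p -> (k < n)%N ->
  cut_indep p k.+1 -> markov_at p k -> cut_indep p k.
Proof.
move=> hp hkn hcut hM pi.
have hsplit := cond_indep_suffix pi hcut (prefix_determined_agree pi k (leqnn k.+1)).
rewrite (Pr_ext _ (A := fun s => agree s pi k k.+1 && agree s pi k.+1 n)
                  (B := fun s => agree s pi k n)) in hsplit; last first.
  by move=> s; rewrite (@agree_split _ s pi k k.+1 n) ?leqnSn.
rewrite (Pr_ext _ (A := fun s => (seg_set s 0 k.+1 == seg_set pi 0 k.+1) && agree s pi k k.+1)
       (B := fun s => (seg_set s 0 k == seg_set pi 0 k) && agree s pi k k.+1)) in hsplit;
  last first.
  move=> s; case h: (agree s pi k k.+1); rewrite ?andbF // !andbT.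
  by rewrite (seg_set_eqKr (leqnSn k) (seg_set_agree h)).
set b := Pr p (fun s => seg_set s 0 k.+1 == seg_set pi 0 k.+1) in hsplit.
have [b0|bN0] := eqVneq b 0.
  have c0 : Pr p (fun s => agree s pi k n) = 0.
    by apply: (Pr_null hp _ b0) => s /(agree_sub (leqnSn k) (leqnn n))/seg_set_suf ->.
  by rewrite (p_null (A := fun s => seg_set s 0 k.+1 == seg_set pi 0 k.+1) hp (eqxx _) b0)
             c0 mul0r mulr0.
apply: (mulfI bN0).
transitivity ((p pi * b) * Pr p (fun s => seg_set s 0 k == seg_set pi 0 k)); first by ring.
rewrite (hcut pi).
transitivity (Pr p (fun s => agree s pi 0 k.+1) * Pr p (fun s => seg_set s 0 k == seg_set pi 0 k)
              * Pr p (fun s => agree s pi k.+1 n)); first by ring.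
by rewrite (hM pi) -mulrA -hsplit; ring.
Qed.

(* The Markov property is automatic after the first step ... *)
Lemma markov_first p : markov_at p 1.
Proof.
move=> pi; rewrite /markov_eq mulrC; congr (_ * _); apply: Pr_ext => s.
  by rewrite -seg_set_one.
by rewrite (@agree_split _ s pi 0 1 2) // -seg_set_one.
Qed.

(* ... and at the last step, where the prefix set determines the last value. *)
Lemma markov_last p k : k.+1 = n -> markov_at p k.
Proof.
move=> hk pi; rewrite /markov_eq.
have lastT s : (seg_set s 0 k == seg_set pi 0 k) -> agree s pi k k.+1.
  by move/eqP => h; rewrite -seg_set_one hk !seg_set_compl h.
rewrite (Pr_ext _ (A := fun s => agree s pi 0 k.+1) (B := fun s => agree s pi 0 k)).
  congr (_ * _); apply: Pr_ext => s.
  by case h: (seg_set s 0 k == seg_set pi 0 k); rewrite //= lastT.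
move=> s; rewrite (@agree_split _ s pi 0 k k.+1) ?leqnSn //.
by case h: (agree s pi 0 k) => //=; rewrite lastT // (seg_set_agree h).
Qed.

Definition all_cuts_indep p := forall k, (0 < k < n)%N -> cut_indep p k.

(* Downward induction from the trivial cut at n. *)
Lemma all_cuts_of_markov p : nonneg p ->
  (forall k, (0 < k < n)%N -> markov_at p k) -> all_cuts_indep p.
Proof.
move=> hp hM k /andP[k0 _]; move: {2}(n - k)%N (erefl (n - k)%N) => m.
elim: m k k0 => [|m IH] k k0 hm.
  by apply: cut_indep_full; rewrite -subn_eq0 hm.
have kn : (k < n)%N by rewrite -subn_gt0 hm.
apply: cut_indep_step => //; first by apply: IH; rewrite ?subnS ?hm.
by apply: hM; rewrite k0 kn.
Qed.

(* The L-decomposability condition at k is the Markov equation at k, once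
   conditional probabilities are cross-multiplied. *)
Lemma condP_markov p k (i : 'I_n) pi : nonneg p -> nat_of_ord i = k ->
  0 < Pr p [pred s : 'S_n | seg_tuple s 0 k == seg_tuple pi 0 k] ->
  condP p [pred s : 'S_n | s i == pi i] [pred s : 'S_n | seg_tuple s 0 k == seg_tuple pi 0 k]
  = condP p [pred s : 'S_n | s i == pi i] [pred s : 'S_n | seg_set s 0 k == seg_set pi 0 k]
  <-> markov_eq p k pi.
Proof.
move=> hp hik; rewrite /condP /markov_eq.
have prefixE : Pr p [pred s : 'S_n | seg_tuple s 0 k == seg_tuple pi 0 k]
               = Pr p (fun s => agree s pi 0 k).
  by apply: Pr_ext => s; rewrite inE seg_tupleE.
rewrite prefixE (Pr_ext _ (A := [pred s : 'S_n | [pred s : 'S_n | s i == pi i] s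
                           && [pred s : 'S_n | seg_tuple s 0 k == seg_tuple pi 0 k] s])
                         (B := fun s => agree s pi 0 k.+1)); last first.
  move=> s; rewrite /= seg_tupleE (@agree_split _ s pi 0 k k.+1) ?leqnSn //.
  by rewrite -hik agree_one andbC.
rewrite (Pr_ext _ (A := [pred s : 'S_n | [pred s : 'S_n | s i == pi i] s
                                  && [pred s : 'S_n | seg_set s 0 k == seg_set pi 0 k] s])
                  (B := fun s => (seg_set s 0 k == seg_set pi 0 k) && agree s pi k k.+1));
  last by move=> s; rewrite !inE -hik agree_one andbC.
move=> a_gt0; have b_gt0 : 0 < Pr p [pred s : 'S_n | seg_set s 0 k == seg_set pi 0 k].
  by apply: (lt_le_trans a_gt0); apply: Pr_le => // s h; rewrite inE (seg_set_agree h).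
split => [/eqP|eq_markov].
  by rewrite eqr_div ?lt0r_neq0 // [X in _ == X]mulrC => /eqP.
by apply/eqP; rewrite eqr_div ?lt0r_neq0 // eq_markov mulrC.
Qed.

(* L-decomposability gives the Markov equation at every step: for
   2 <= k <= n-2 by definition (null prefixes being trivial), and for k = 1
   and k = n-1 automatically. *)
Lemma markov_of_L p : nonneg p -> L_decomposable p ->
  forall k, (0 < k < n)%N -> markov_at p k.
Proof.
move=> hp hL k /andP[k0 kn].
have [k1|k1] := leqP k 1.
  suff -> : k = 1%N by apply: markov_first.
  by apply/eqP; rewrite eqn_leq k1 k0.
have [kn'|kn'] := leqP n k.+1; first by apply: markov_last; apply/eqP; rewrite eqn_leq kn kn'.
move=> pi; have [a0|a0] := eqVneq (Pr p (fun s => agree s pi 0 k)) 0.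
  rewrite /markov_eq a0 (Pr_null hp _ a0) ?mul0r // => s.
  exact: agree_sub.
pose i : 'I_n := Ordinal kn.
have a_gt0 : 0 < Pr p [pred s : 'S_n | seg_tuple s 0 k == seg_tuple pi 0 k].
  by rewrite (Pr_ext _ (B := fun s => agree s pi 0 k)) ?lt0r ?a0 ?Pr_ge0 // => s;
    rewrite inE seg_tupleE.
apply/(@condP_markov _ _ i) => //; apply: hL => //.
by rewrite leq_subRL ?add2n // (leq_trans k1 (ltnW kn)).
Qed.

Lemma L_of_markov p : nonneg p ->
  (forall k, (0 < k < n)%N -> markov_at p k) -> L_decomposable p.
Proof.
move=> hp hM k k2 _ pi i hik a_gt0; apply/(condP_markov hp hik a_gt0); apply: hM.
by rewrite (leq_trans _ k2) //= -hik ltn_ord.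
Qed.

End Markov.

Lemma zip_shift (T : Type) (a e : T) (l : seq T) :
  zip (a :: rcons l e) (rcons l e) = rcons (zip (a :: l) l) (last a l, e).
Proof. by elim: l a => [|c l IH] a //=; rewrite IH. Qed.

Section Blocks.
Variables (R : realFieldType) (n : nat).
Implicit Types (p q : 'S_n -> R) (s pi : 'S_n) (k : nat) (cs : seq nat).

Lemma blocks_rcons cs : blocks n cs = rcons (zip (0%N :: cs) cs) (last 0%N cs, n).
Proof. exact: zip_shift. Qed.

Definition cut_sets_eq cs pi : pred 'S_n :=
  fun s => all (fun c => seg_set s 0 c == seg_set pi 0 c) cs.

Lemma cut_sets_eq_refl cs pi : cut_sets_eq cs pi pi.
Proof. by apply/allP => c _ /=. Qed.

Lemma blocks_seg_eq s pi l a e : path ltn a (rcons l e) ->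
  seg_set s 0 a = seg_set pi 0 a ->
  all (fun ab => seg_set s ab.1 ab.2 == seg_set pi ab.1 ab.2) (zip (a :: rcons l e) (rcons l e))
  = cut_sets_eq l pi s && (seg_set s 0 e == seg_set pi 0 e).
Proof.
elim: l a => [|c l IH] a /=.
  by rewrite !andbT => hae ha; rewrite seg_set_eqK ?(ltnW hae).
case/andP => hac hp ha; rewrite seg_set_eqK ?(ltnW hac) //.
by case: eqP => hc //=; rewrite IH.
Qed.

(* The unordered marginals on the blocks coincide iff the prefix sets at all
   sections coincide: the blocks are the successive differences. *)
Lemma unord_eqE cs pi : consecutive_sections n cs -> unord_eq cs pi =1 cut_sets_eq cs pi.
Proof.
move=> hcs s; rewrite /unord_eq inE eq_map_all all_map.
rewrite (eq_all (a2 := fun ab => seg_set s ab.1 ab.2 == seg_set pi ab.1 ab.2)) //.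
by rewrite blocks_seg_eq // ?seg_set0 // !seg_set_full // eqxx andbT.
Qed.

(* Induction
   on the last section k: the last block (k', n) of the coarser partition is
   split at k using conditional independence at k. *)
Lemma block_factorization q pi cs : all_cuts_indep q -> consecutive_sections n cs ->
  (forall s, ~~ cut_sets_eq cs pi s -> q s = 0) ->
  q pi * Pr q predT ^+ size cs
  = \prod_(ab <- blocks n cs) Pr q (fun s => agree s pi ab.1 ab.2).
Proof.
move=> hcut; elim/last_ind: cs => [|l k IH] hpath hsupp.
  rewrite /blocks big_seq1 expr0 mulr1 -Pr1; apply: Pr_ext => s /=.
  by rewrite agree_all.
move: (hpath); rewrite /consecutive_sections rcons_path last_rcons => /andP[hpk kn].
have k'k : (last 0%N l < k)%N by move: hpk; rewrite rcons_path => /andP[].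
have k0 : (0 < k)%N by apply: leq_ltn_trans k'k.
have hpl : consecutive_sections n l.
  move: hpk; rewrite /consecutive_sections !rcons_path => /andP[-> _] /=.
  exact: ltn_trans k'k kn.
have cutk s : ~~ (seg_set s 0 k == seg_set pi 0 k) -> q s = 0.
  by move=> hs; apply: hsupp; rewrite /cut_sets_eq all_rcons negb_and hs.
have suppl s : ~~ cut_sets_eq l pi s -> q s = 0.
  by move=> hs; apply: hsupp; rewrite /cut_sets_eq all_rcons negb_and hs orbT.
rewrite size_rcons exprSr mulrA (IH hpl suppl) !blocks_rcons zip_shift !big_rcons /=.
rewrite -!mulrA; congr (_ * _).
set k' := last 0%N l; set X := seg_set pi 0 k.
have onX (A : pred 'S_n) : Pr q (fun s => (seg_set s 0 k == X) && A s) = Pr q A.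
  by apply: (Pr_supp cutk) => s /= ->.
have kin : (0 < k < n)%N by rewrite k0.
have := cond_indep X (hcut k kin) (prefix_determined_agree pi k' (leqnn k))
                     (suffix_determined_agree pi (leqnn k) (leqnn n)).
rewrite !onX (Pr_supp (A := fun s => seg_set s 0 k == X) (B := predT) cutk) // last_rcons => <-.
congr (_ * _); apply: Pr_ext => s.
by rewrite (@agree_split _ s pi k' k n) // (ltnW k'k) (ltnW kn).
Qed.

(* Conditioning on the prefix sets at the sections preserves cut independence:
   at any cut, the conditioning event is the intersection of the constraints
   at sections before the cut (prefix-determined) and after it. *)
Lemma restr_cut_sets_indep p cs pi : nonneg p -> all_cuts_indep p ->
  all_cuts_indep (restr p (cut_sets_eq cs pi)).
Proof.
move=> hp hcut k hk.
apply: (cut_indep_restr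
  (A := fun s => all (fun c => (c <= k)%N ==> (seg_set s 0 c == seg_set pi 0 c)) cs)
  (B := fun s => all (fun c => (k < c)%N ==> (seg_set s 0 c == seg_set pi 0 c)) cs)).
- exact: hp.
- exact: hcut.
- move=> s t hst; apply: eq_all => c /=; case: leqP => //= hc.
  exact: prefix_determined_cut hc _ _ hst.
- move=> s t hst; apply: eq_all => c /=; case: ltnP => //= hc.
  exact: suffix_determined_cut (ltnW hc) _ _ hst.
- by move=> s; rewrite /= -all_predI; apply: eq_all => c /=; case: leqP; rewrite ?andbT.
Qed.

Definition blocks_cond_indep p := forall cs, consecutive_sections n cs ->
  forall pi, 0 < Pr p (unord_eq cs pi) ->
  condP p (pred1 pi) (unord_eq cs pi)
  = \prod_(ab <- blocks n cs) condP p (ord_eq ab pi) (unord_eq cs pi).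

(* Cut independence gives the conditional formula: condition on the prefix
   sets at the sections and apply the block factorization. *)
Lemma blocks_cond_indep_of_cuts p : nonneg p -> all_cuts_indep p -> blocks_cond_indep p.
Proof.
move=> hp hcut cs hcs pi.
have supp s : ~~ cut_sets_eq cs pi s -> restr p (cut_sets_eq cs pi) s = 0.
  by rewrite /restr => /negbTE ->.
have := block_factorization (restr_cut_sets_indep cs pi hp hcut) hcs supp.
rewrite {1}/restr cut_sets_eq_refl Pr_restr.
under eq_bigr do rewrite Pr_restr.
set W := cut_sets_eq cs pi.
have unordW : Pr p (unord_eq cs pi) = Pr p W by apply: Pr_ext; apply: unord_eqE.
rewrite /condP unordW => fact U_gt0.
rewrite (Pr_ext _ (B := pred1 pi)) ?Pr1; last first.
  by move=> s; rewrite /= unord_eqE //; case: eqP => // ->; rewrite cut_sets_eq_refl.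
rewrite (eq_bigr (fun ab => Pr p (fun s => W s && agree s pi ab.1 ab.2) / Pr p W)); last first.
  move=> ab _; congr (_ / _); apply: Pr_ext => s.
  by rewrite /= unord_eqE // /ord_eq /= seg_tupleE andbC.
rewrite prodf_div -fact big_const_seq count_predT iter_mulr_1 blocks_rcons size_rcons.
rewrite size_zip /= (minn_idPr (leqnSn _)) (Pr_ext _ (B := W)); last first.
  by move=> s; rewrite andbT.
have UN0 := lt0r_neq0 U_gt0.
by rewrite exprSr invfM mulrA -(mulrA (p pi)) mulfV ?mulr1 // expf_neq0.
Qed.

(* The partition with the single section k gives back cut independence at k. *)
Lemma cuts_of_blocks_cond_indep p : nonneg p -> blocks_cond_indep p -> all_cuts_indep p.
Proof.
move=> hp hC k /andP[k0 kn] pi.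
have hcs : consecutive_sections n [:: k] by rewrite /consecutive_sections /= k0 kn.
have cutE s : unord_eq [:: k] pi s = (seg_set s 0 k == seg_set pi 0 k).
  by rewrite unord_eqE // /cut_sets_eq /= andbT.
have preX s : agree s pi 0 k -> unord_eq [:: k] pi s by rewrite cutE => /seg_set_agree ->.
have sufX s : agree s pi k n -> unord_eq [:: k] pi s by rewrite cutE => /seg_set_suf ->.
have bE : Pr p (unord_eq [:: k] pi) = Pr p (fun s => seg_set s 0 k == seg_set pi 0 k).
  exact: Pr_ext.
set b := Pr p (fun s => seg_set s 0 k == seg_set pi 0 k) in bE *.
have [b0|bN0] := eqVneq b 0.
  rewrite (p_null (A := fun s => seg_set s 0 k == seg_set pi 0 k) hp (eqxx _) b0).
  rewrite (Pr_null hp _ b0) ?mul0r // => s.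
  by move/seg_set_agree ->.
have := hC _ hcs pi; rewrite bE lt0r bN0 Pr_ge0 // => /(_ isT).
rewrite /blocks /= !big_cons big_nil mulr1 /condP bE.
rewrite (PrI_sub _ (A := pred1 pi)); last by move=> s /eqP ->; rewrite cutE.
rewrite (PrI_sub _ (A := ord_eq (0%N, k) pi)); last first.
  by move=> s; rewrite /ord_eq inE /= seg_tupleE; apply: preX.
rewrite (PrI_sub _ (A := ord_eq (k, n) pi)); last first.
  by move=> s; rewrite /ord_eq inE /= seg_tupleE; apply: sufX.
rewrite Pr1 mulf_div => /eqP; rewrite eqr_div ?mulf_neq0 // mulrA => /eqP /(mulIf bN0) ->.
by congr (_ * _); apply: Pr_ext => s; rewrite /ord_eq inE /= seg_tupleE.
Qed.

End Blocks.

Unset Implicit Arguments.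

Theorem proposition2 (R : realFieldType) (n : nat) (p : 'S_n -> R) :
  is_dist p ->
  (L_decomposable p <->
   forall cs : seq nat, consecutive_sections n cs ->
   forall pi : 'S_n, 0 < Pr p (unord_eq cs pi) ->
   condP p (pred1 pi) (unord_eq cs pi)
   = \prod_(ab <- blocks n cs) condP p (ord_eq ab pi) (unord_eq cs pi)).
Proof.
move=> [hp _]; split => [hL | hC].
- apply: blocks_cond_indep_of_cuts => //.
  by apply: all_cuts_of_markov => //; apply: markov_of_L.
- apply: L_of_markov => // k hk.
  apply: markov_of_cut_indep; first by case/andP: hk.
  exact: cuts_of_blocks_cond_indep hp hC k hk.
Qed.
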